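(* Let $n\ge 1$ be a natural number and let $\Re_{n+1}$ denote the space of real $(n+1)\times(n+1)$ matrices $(a_{ij})$ with indices $0\le i,j\le n$. Then the set $bell(n)\subseteq\Re_{n+1}$ is convex, and $$q(n)\supseteq bell(n)\supseteq c(n).$$
   Context: $bell(n)$ is the set of all $(p_{ij})\in\Re_{n+1}$ such that $p_{00}=1$ and there exist a finite-dimensional Hilbert space $H$, projections $E_1,\dots,E_n,F_1,\dots,F_n$ on $H$, and a density operator (statistical operator) $W$ on $H\otimes H$ with $p_{i0}=\mathrm{tr}[W(E_i\otimes I)]$, $p_{0j}=\mathrm{tr}[W(I\otimes F_j)]$, $p_{ij}=\mathrm{tr}[W(E_i\otimes F_j)]$ for $i,j=1,\dots,n$ ($I$ the identity on $H$). $c(n)$ is the set of all $(p_{ij})\in\Re_{n+1}$ such that $p_{00}=1$ and there exist a probability space $(X,\Sigma,\mu)$ and events $A_1,\dots,A_n,B_1,\dots,B_n\in\Sigma$ with $p_{i0}=\mu(A_i)$, $p_{0j}=\mu(B_j)$, $p_{ij}=\mu(A_i\cap B_j)$ for $i,j=1,\dots,n$. $q(n)$ is the set of all $(p_{ij})\in\Re_{n+1}$ such that $p_{00}=1$ and there exist a Hilbert space $H$, projections $E_1,\dots,E_n,F_1,\dots,F_n$ on $H$ (not necessarily commuting), and a density operator $W$ on $H$ with $p_{i0}=\mathrm{tr}(WE_i)$, $p_{0j}=\mathrm{tr}(WF_j)$, $p_{ij}=\mathrm{tr}[W(E_i\wedge F_j)]$ for $i,j=1,\dots,n$, where $E_i\wedge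 F_j$ is the projection onto $E_i(H)\cap F_j(H)$. *)

From HB Require Import structures.
From mathcomp Require Import all_boot all_order all_algebra.
From mathcomp Require Import all_classical all_reals.
From mathcomp Require Import ereal measure probability.
From mathcomp Require Import complex mxtens.

Set Implicit Arguments.
Unset Strict Implicit.
Unset Printing Implicit Defensive.

Import Order.TTheory GRing.Theory Num.Theory.
Local Open Scope ring_scope.
Local Open Scope classical_set_scope.

Section Defs.
Variable R : realType.
Local Notation C := R[i].
Definition RtoC (x : R) : C := Complex x 0.

(* Indexing convention: a point of Re_{n+1} is a matrix p : 'M[R]_(n.+1)
   with indices 0..n; the events / projections are indexed by 'I_n, and
   index i : 'I_n (standing for i+1 in 1..n) corresponds to row/column
   [lift ord0 i] of p. *)
Definition idx {n : nat} (i : 'I_n) : 'I_n.+1 := lift ord0 i.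

Definition c_set (n : nat) : set 'M[R]_(n.+1) :=
  [set p | p ord0 ord0 = 1 /\
     exists (d : measure_display) (X : measurableType d) (mu : probability X R)
            (A B : 'I_n -> set X),
       (forall i, measurable (A i)) /\ (forall j, measurable (B j)) /\
       (forall i, mu (A i) = (p (idx i) ord0)%:E) /\
       (forall j, mu (B j) = (p ord0 (idx j))%:E) /\
       (forall i j, mu (A i `&` B j) = (p (idx i) (idx j))%:E)].

(* bell(n): finite-dimensional Hilbert space H = C^m (column vectors),  *)
(* operators on H are m x m complex matrices, H (x) H = C^(m*m) with   *)
(* the Kronecker product [*t] of matrices.                              *)
Definition adjmx {m k : nat} (A : 'M[C]_(m, k)) : 'M[C]_(k, m) :=
  (map_mx Num.conj A)^T.

Definition is_projmx {m : nat} (P : 'M[C]_m) : Prop :=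
  P *m P = P /\ adjmx P = P.

Definition is_densitymx {m : nat} (W : 'M[C]_m) : Prop :=
  adjmx W = W /\
  (forall v : 'cV[C]_m, 0 <= (adjmx v *m W *m v) ord0 ord0) /\
  \tr W = 1.

Definition bell_set (n : nat) : set 'M[R]_(n.+1) :=
  [set p | p ord0 ord0 = 1 /\
     exists (m : nat) (E F : 'I_n -> 'M[C]_m) (W : 'M[C]_(m * m)),
       (forall i, is_projmx (E i)) /\ (forall j, is_projmx (F j)) /\
       is_densitymx W /\
       (forall i, \tr (W *m (E i *t (1%:M : 'M[C]_m))) = RtoC (p (idx i) ord0)) /\
       (forall j, \tr (W *m ((1%:M : 'M[C]_m) *t F j)) = RtoC (p ord0 (idx j))) /\
       (forall i j, \tr (W *m (E i *t F j)) = RtoC (p (idx i) (idx j)))].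

(* q(n): arbitrary (possibly infinite-dimensional, possibly non-       *)
(* separable) complex Hilbert space.                                   *)
Section Hilbert.
Variable H : lmodType C.
Variable ip : H -> H -> C.   (* inner product, linear in 2nd argument *)

Definition hnorm2 (x : H) : C := ip x x.

Definition hcauchy (u : nat -> H) : Prop :=
  forall e : R, 0 < e -> exists N : nat, forall k l : nat,
    (N <= k)%N -> (N <= l)%N -> hnorm2 (u k - u l) < RtoC e.

Definition hconv (u : nat -> H) (x : H) : Prop :=
  forall e : R, 0 < e -> exists N : nat, forall k : nat,
    (N <= k)%N -> hnorm2 (u k - x) < RtoC e.

Definition is_hilbert : Prop :=
  (forall x y z (a : C), ip x (a *: y + z) = a * ip x y + ip x z) /\
  (forall x y, ip y x = Num.conj (ip x y)) /\
  (forall x, 0 <= ip x x) /\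
  (forall x, ip x x = 0 -> x = 0) /\
  (forall u, hcauchy u -> exists x, hconv u x).

Definition is_proj (P : H -> H) : Prop :=
  (forall (a : C) x y, P (a *: x + y) = a *: P x + P y) /\
  (forall x, P (P x) = P x) /\
  (forall x y, ip (P x) y = ip x (P y)).

(* G is the projection E /\ F onto E(H) \cap F(H)
   (the range of a projection is its set of fixed points) *)
Definition is_meet_proj (E F G : H -> H) : Prop :=
  is_proj G /\ forall x, G x = x <-> (E x = x /\ F x = x).

Definition cconv (u : nat -> C) (l : C) : Prop :=
  forall e : R, 0 < e -> exists N : nat, forall k : nat,
    (N <= k)%N -> `|u k - l| < RtoC e.

(* A density operator W written as a countable mixture
     W = sum_k lam_k |psi_k><psi_k|
   with lam_k >= 0, sum_k lam_k = 1, and the psi_k with lam_k <> 0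
   orthonormal (spectral decomposition); the series converges in H. *)
Definition density_decomp (W : H -> H) (psi : nat -> H) (lam : nat -> R) : Prop :=
  (forall k, 0 <= lam k) /\
  cconv (fun N => RtoC (\sum_(k < N) lam k)) 1 /\
  (forall k l, lam k != 0 -> lam l != 0 -> ip (psi k) (psi l) = (k == l)%:R) /\
  (forall x, hconv (fun N => \sum_(k < N) RtoC (lam k) *: (ip (psi k) x *: psi k)) (W x)).

Definition is_density (W : H -> H) : Prop :=
  exists psi lam, density_decomp W psi lam.

(* tr(W A) = t, computed from a decomposition of W
   (tr(W A) = sum_k lam_k <psi_k, A psi_k>; independent of the decomposition) *)
Definition trace_is (W A : H -> H) (t : C) : Prop :=
  exists psi lam, density_decomp W psi lam /\
    cconv (fun N => \sum_(k < N) RtoC (lam k) * ip (psi k) (A (psi k))) t.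

End Hilbert.

Definition q_set (n : nat) : set 'M[R]_(n.+1) :=
  [set p | p ord0 ord0 = 1 /\
     exists (H : lmodType C) (ip : H -> H -> C), is_hilbert ip /\
     exists (E F : 'I_n -> H -> H) (EF : 'I_n -> 'I_n -> H -> H) (W : H -> H),
       (forall i, is_proj ip (E i)) /\ (forall j, is_proj ip (F j)) /\
       (forall i j, is_meet_proj ip (E i) (F j) (EF i j)) /\
       is_density ip W /\
       (forall i, trace_is ip W (E i) (RtoC (p (idx i) ord0))) /\
       (forall j, trace_is ip W (F j) (RtoC (p ord0 (idx j)))) /\
       (forall i j, trace_is ip W (EF i j) (RtoC (p (idx i) (idx j))))].

Definition convex_mxset (n : nat) (S : set 'M[R]_(n.+1)) : Prop :=
  forall p q (t : R), S p -> S q -> 0 <= t -> t <= 1 ->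
    S (t *: p + (1 - t) *: q).

End Defs.

From HB Require Import structures.
From mathcomp Require Import all_boot all_order all_algebra.
From mathcomp Require Import all_classical all_reals.
From mathcomp Require Import ereal measure probability.
From mathcomp Require Import complex mxtens.
From mathcomp Require Import spectral sesquilinear.
From mathcomp Require Import topology normedtype sequences.

Set Implicit Arguments.
Unset Strict Implicit.
Unset Printing Implicit Defensive.

Import Order.TTheory GRing.Theory Num.Theory.
Import numFieldNormedType.Exports.
Local Open Scope ring_scope.
Local Open Scope classical_set_scope.

(* Convexity: realisations of two points on spaces H1 and H2 combine on
   H1 (+) H2, with the projections E1 i (+) E2 i, F1 j (+) F2 j and the state
   t W1 + (1 - t) W2 carried by the blocks H1 (x) H1 and H2 (x) H2 of
   (H1 (+) H2) (x) (H1 (+) H2); every trace then mixes linearly.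
   c(n) <= bell(n): which of the A i and which of the B j contain a sample
   point is a hidden variable with finitely many values; diagonal projections
   and the diagonal state given by its law realise the same probabilities.
   bell(n) <= q(n): on H (x) H the projections E i (x) I and I (x) F j commute,
   so their meet is E i (x) F j, and the spectral decomposition of W is the
   required mixture of pure states; finite-dimensional spaces are complete. *)

Section Adjoint.
Variable R : realType.
Local Notation C := R[i].

Lemma RtoCE (x : R) : RtoC x = x%:C%C.
Proof. by []. Qed.

Lemma conj_RtoC (x : R) : Num.conj (RtoC x) = RtoC x.
Proof. exact: conjc_real. Qed.

Lemma RtoC_sum (I : Type) (r : seq I) (P : pred I) (f : I -> R) :
  RtoC (\sum_(i <- r | P i) f i) = \sum_(i <- r | P i) RtoC (f i).
Proof. by rewrite RtoCE rmorph_sum. Qed.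

Lemma RtoC_Re (z : C) : 0 <= z -> RtoC (complex.Re z) = z.
Proof. by case: z => a b; rewrite lecE /= => /andP[/eqP -> _]. Qed.

Lemma RtoC_ge0 (x : R) : (0 <= RtoC x) = (0 <= x).
Proof. exact: lecR. Qed.

Lemma adjmxK m k (A : 'M[C]_(m, k)) : adjmx (adjmx A) = A.
Proof. by apply/matrixP => i j; rewrite !mxE conjCK. Qed.

Lemma adjmxM m k l (A : 'M[C]_(m, k)) (B : 'M[C]_(k, l)) :
  adjmx (A *m B) = adjmx B *m adjmx A.
Proof. by rewrite /adjmx map_mxM trmx_mul. Qed.

Lemma adjmxD m k (A B : 'M[C]_(m, k)) : adjmx (A + B) = adjmx A + adjmx B.
Proof. by rewrite /adjmx map_mxD linearD. Qed.

Lemma adjmxZ m k c (A : 'M[C]_(m, k)) : adjmx (c *: A) = Num.conj c *: adjmx A.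
Proof. by apply/matrixP => i j; rewrite !mxE rmorphM. Qed.

Lemma adjmx0 m k : adjmx (0 : 'M[C]_(m, k)) = 0.
Proof. by rewrite /adjmx map_mx0 trmx0. Qed.

Lemma adjmx_scalar m (c : C) : adjmx (c%:M : 'M[C]_m) = (Num.conj c)%:M.
Proof. by rewrite /adjmx map_scalar_mx tr_scalar_mx. Qed.

Lemma adjmx_tens m k p l (A : 'M[C]_(m, k)) (B : 'M[C]_(p, l)) :
  adjmx (A *t B) = adjmx A *t adjmx B.
Proof. by rewrite /adjmx map_mxT trmx_tens. Qed.

Lemma adjmx_row m k l (A : 'M[C]_(m, k)) (B : 'M[C]_(m, l)) :
  adjmx (row_mx A B) = col_mx (adjmx A) (adjmx B).
Proof. by rewrite /adjmx map_row_mx tr_row_mx. Qed.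

Lemma adjmx_block m1 m2 k1 k2 (A : 'M[C]_(m1, k1)) (B : 'M[C]_(m1, k2))
    (D : 'M[C]_(m2, k1)) (E : 'M[C]_(m2, k2)) :
  adjmx (block_mx A B D E) = block_mx (adjmx A) (adjmx D) (adjmx B) (adjmx E).
Proof. by rewrite /adjmx map_block_mx tr_block_mx. Qed.

Lemma tensmx1 m p : (1%:M : 'M[C]_m) *t (1%:M : 'M[C]_p) = 1%:M.
Proof.
apply/matrixP => i j; case: (mxtens_indexP i) => a b; case: (mxtens_indexP j) => c d.
rewrite tensmxE !mxE (inj_eq (can_inj (@mxtens_indexK _ _))) xpair_eqE.
by case: (a == c); case: (b == d); rewrite ?mulr1 ?mulr0.
Qed.

Lemma projmx_tens m k (P : 'M[C]_m) (Q : 'M[C]_k) :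
  is_projmx P -> is_projmx Q -> is_projmx (P *t Q).
Proof.
by move=> [PP aP] [QQ aQ]; split; rewrite ?tensmx_mul ?adjmx_tens ?PP ?QQ ?aP ?aQ.
Qed.

Lemma projmx1 m : is_projmx (1%:M : 'M[C]_m).
Proof. by split; rewrite ?mulmx1 // adjmx_scalar conjC1. Qed.

Lemma projmx_block m1 m2 (P1 : 'M[C]_m1) (P2 : 'M[C]_m2) :
  is_projmx P1 -> is_projmx P2 -> is_projmx (block_mx P1 0 0 P2).
Proof.
move=> [PP1 aP1] [PP2 aP2]; split; last by rewrite adjmx_block !adjmx0 aP1 aP2.
by rewrite mulmx_block PP1 PP2 !mulmx0 !mul0mx !addr0 !add0r.
Qed.

End Adjoint.

Section Convexity.
Variable R : realType.
Local Notation C := R[i].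

Lemma mxtrace_compress k l (V : 'M[C]_(k, l)) (W : 'M[C]_k) (X : 'M[C]_l) :
  \tr (adjmx V *m W *m V *m X) = \tr (W *m (V *m X *m adjmx V)).
Proof. by rewrite -!mulmxA mxtrace_mulC !mulmxA. Qed.

Lemma densitymx_compress k l (V : 'M[C]_(k, l)) (W : 'M[C]_k) :
  V *m adjmx V = 1%:M -> is_densitymx W -> is_densitymx (adjmx V *m W *m V).
Proof.
move=> VV [aW [W_ge0 trW]]; split; last split.
- by rewrite !adjmxM adjmxK aW mulmxA.
- by move=> v; have := W_ge0 (V *m v); rewrite adjmxM !mulmxA.
- by rewrite -[_ *m V]mulmx1 mxtrace_compress mulmx1 VV mulmx1.
Qed.

Lemma densitymx_convex k (t : R) (W1 W2 : 'M[C]_k) : 0 <= t -> t <= 1 ->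
  is_densitymx W1 -> is_densitymx W2 ->
  is_densitymx (RtoC t *: W1 + RtoC (1 - t) *: W2).
Proof.
move=> t0 t1 [aW1 [W1_ge0 trW1]] [aW2 [W2_ge0 trW2]]; split; last split.
- by rewrite adjmxD !adjmxZ aW1 aW2 !conj_RtoC.
- move=> v; rewrite mulmxDr mulmxDl -!scalemxAr -!scalemxAl mxE.
  rewrite [_ (RtoC t *: _) _ _]mxE [_ (RtoC (1 - t) *: _) _ _]mxE.
  by rewrite addr_ge0 ?mulr_ge0 ?RtoC_ge0 ?subr_ge0.
- by rewrite mxtraceD !mxtraceZ trW1 trW2 !mulr1 !RtoCE -rmorphD /= addrC subrK.
Qed.

Lemma coisometry_tens m k p l (V : 'M[C]_(m, k)) (U : 'M[C]_(p, l)) :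
  V *m adjmx V = 1%:M -> U *m adjmx U = 1%:M -> (V *t U) *m adjmx (V *t U) = 1%:M.
Proof. by move=> VV UU; rewrite adjmx_tens tensmx_mul VV UU tensmx1. Qed.

Lemma compress_tens m k p l (V : 'M[C]_(m, k)) (U : 'M[C]_(p, l)) X Y :
  (V *t U) *m (X *t Y) *m adjmx (V *t U) =
  (V *m X *m adjmx V) *t (U *m Y *m adjmx U).
Proof. by rewrite adjmx_tens !tensmx_mul. Qed.

Section DirectSum.
Variables m1 m2 : nat.

Definition row_inl : 'M[C]_(m1, m1 + m2) := row_mx 1%:M 0.
Definition row_inr : 'M[C]_(m2, m1 + m2) := row_mx 0 1%:M.

Lemma row_inl_coisometry : row_inl *m adjmx row_inl = 1%:M.
Proof. by rewrite adjmx_row adjmx_scalar conjC1 adjmx0 mul_row_col mulmx1 mul0mx addr0. Qed.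

Lemma row_inr_coisometry : row_inr *m adjmx row_inr = 1%:M.
Proof. by rewrite adjmx_row adjmx_scalar conjC1 adjmx0 mul_row_col mulmx1 mul0mx add0r. Qed.

Lemma compress_row_inl (A : 'M[C]_(m1 + m2)) : row_inl *m A *m adjmx row_inl = ulsubmx A.
Proof.
rewrite -[A]submxK adjmx_row adjmx_scalar conjC1 adjmx0 mul_row_block.
by rewrite !mul1mx !mul0mx !addr0 mul_row_col mulmx1 mulmx0 addr0 block_mxKul.
Qed.

Lemma compress_row_inr (A : 'M[C]_(m1 + m2)) : row_inr *m A *m adjmx row_inr = drsubmx A.
Proof.
rewrite -[A]submxK adjmx_row adjmx_scalar conjC1 adjmx0 mul_row_block.
by rewrite !mul1mx !mul0mx !add0r mul_row_col mulmx1 mulmx0 add0r block_mxKdr.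
Qed.

(* [W1] and [W2] are carried by the blocks [H1 (x) H1] and [H2 (x) H2]. *)
Definition mix_densitymx (t : R) (W1 : 'M[C]_(m1 * m1)) (W2 : 'M[C]_(m2 * m2)) :=
  RtoC t *: (adjmx (row_inl *t row_inl) *m W1 *m (row_inl *t row_inl)) +
  RtoC (1 - t) *: (adjmx (row_inr *t row_inr) *m W2 *m (row_inr *t row_inr)).

Lemma densitymx_mix t W1 W2 : 0 <= t -> t <= 1 ->
  is_densitymx W1 -> is_densitymx W2 -> is_densitymx (mix_densitymx t W1 W2).
Proof.
have inl := coisometry_tens row_inl_coisometry row_inl_coisometry.
have inr := coisometry_tens row_inr_coisometry row_inr_coisometry.
by move=> t0 t1 W1d W2d; apply: densitymx_convex => //; apply: densitymx_compress.
Qed.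

Lemma mxtrace_mix_tens t W1 W2 (X Y : 'M[C]_(m1 + m2)) :
  \tr (mix_densitymx t W1 W2 *m (X *t Y)) =
  RtoC t * \tr (W1 *m (ulsubmx X *t ulsubmx Y)) +
  RtoC (1 - t) * \tr (W2 *m (drsubmx X *t drsubmx Y)).
Proof.
rewrite mulmxDl mxtraceD -!scalemxAl !mxtraceZ !mxtrace_compress !compress_tens.
by rewrite !compress_row_inl !compress_row_inr.
Qed.

End DirectSum.

Lemma bell_convex n : convex_mxset (@bell_set R n).
Proof.
move=> p q t [p00 [m1 [E1 [F1 [W1 [E1P [F1P [W1d [pA [pB pAB]]]]]]]]]]
  [q00 [m2 [E2 [F2 [W2 [E2P [F2P [W2d [qA [qB qAB]]]]]]]]]] t0 t1.
have mixE i j : RtoC t * RtoC (p i j) + RtoC (1 - t) * RtoC (q i j) =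
    RtoC ((t *: p + (1 - t) *: q) i j).
  by rewrite !mxE !RtoCE -!rmorphM -rmorphD.
split; first by rewrite !mxE p00 q00 !mulr1 addrC subrK.
exists (m1 + m2)%N, (fun i => block_mx (E1 i) 0 0 (E2 i)),
  (fun j => block_mx (F1 j) 0 0 (F2 j)), (mix_densitymx t W1 W2).
split; first by move=> i; apply: projmx_block.
split; first by move=> j; apply: projmx_block.
split; first exact: densitymx_mix.
split; last split.
- move=> i; rewrite scalar_mx_block mxtrace_mix_tens.
  by rewrite !block_mxKul !block_mxKdr pA qA mixE.
- move=> j; rewrite scalar_mx_block mxtrace_mix_tens.
  by rewrite !block_mxKul !block_mxKdr pB qB mixE.
- by move=> i j; rewrite mxtrace_mix_tens !block_mxKul !block_mxKdr pAB qAB mixE.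
Qed.

End Convexity.

Section DiagonalModel.
Variable R : realType.
Local Notation C := R[i].

Lemma sum_mxtens (V : nmodType) m k (F : 'I_(m * k) -> V) :
  \sum_r F r = \sum_(u : 'I_m * 'I_k) F (mxtens_index u).
Proof.
by apply: reindex; exists (@mxtens_unindex m k) => r _;
  rewrite ?mxtens_indexK ?mxtens_unindexK.
Qed.

Definition projmx_pred m (P : pred 'I_m) : 'M[C]_m := diag_mx (\row_r (P r)%:R).

Lemma projmx_predP m (P : pred 'I_m) : is_projmx (projmx_pred P).
Proof.
split; apply/matrixP => i j; rewrite ?mul_diag_mx !mxE ?conjC_nat.
  by case: (P i); rewrite ?mul1r ?mul0r ?mul0rn.
have [->|_] := eqVneq i j; first by rewrite !mulr1n conjC_nat.
by rewrite !mulr0n conjC0.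
Qed.

Lemma projmx_predT m : projmx_pred (@predT 'I_m) = 1%:M.
Proof. by apply/matrixP => i j; rewrite !mxE. Qed.

Lemma densitymx_diag k (w : 'rV[C]_k) :
  (forall r, 0 <= w 0 r) -> \sum_r w 0 r = 1 -> is_densitymx (diag_mx w).
Proof.
move=> w_ge0 w1; split; last split; last by rewrite mxtrace_diag.
- apply/matrixP => i j; rewrite !mxE eq_sym.
  by case: eqVneq => [->|]; rewrite ?mulr1n ?mulr0n ?geC0_conj ?conjC0.
- move=> v; rewrite mul_mx_diag mxE; apply: sumr_ge0 => r _; rewrite !mxE.
  by rewrite mulrAC mulr_ge0 // mulrC mul_conjC_ge0.
Qed.

Lemma mxtrace_diag_tens m (w : 'rV[C]_(m * m)) (P Q : pred 'I_m) :
  \tr (diag_mx w *m (projmx_pred P *t projmx_pred Q)) =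
  \sum_(u | P u.1 && Q u.2) w 0 (mxtens_index u).
Proof.
rewrite /mxtrace sum_mxtens [RHS]big_mkcond; apply: eq_bigr => -[a b] _ /=.
rewrite mul_diag_mx mxE tensmxE !mxE !eqxx !mulr1n.
by case: (P a); case: (Q b); rewrite ?mulr1 ?mulr0.
Qed.

Lemma bell_hidden_variable n m (p : 'M[R]_n.+1) (q : 'I_m * 'I_m -> R)
    (a b : 'I_n -> pred 'I_m) :
  p ord0 ord0 = 1 -> (forall u, 0 <= q u) -> \sum_u q u = 1 ->
  (forall i, p (idx i) ord0 = \sum_(u | a i u.1) q u) ->
  (forall j, p ord0 (idx j) = \sum_(u | b j u.2) q u) ->
  (forall i j, p (idx i) (idx j) = \sum_(u | a i u.1 && b j u.2) q u) ->
  bell_set p.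
Proof.
move=> p00 q_ge0 q1 pA pB pAB; split => //.
pose W : 'M[C]_(m * m) := diag_mx (\row_r RtoC (q (mxtens_unindex r))).
have trW P Q : \tr (W *m (projmx_pred P *t projmx_pred Q)) =
    RtoC (\sum_(u | P u.1 && Q u.2) q u).
  by rewrite mxtrace_diag_tens RtoC_sum; apply: eq_bigr => u _; rewrite mxE mxtens_indexK.
exists m, (fun i => projmx_pred (a i)), (fun j => projmx_pred (b j)), W.
split; first by move=> i; apply: projmx_predP.
split; first by move=> j; apply: projmx_predP.
split.
  apply: densitymx_diag => [r|]; first by rewrite mxE RtoC_ge0.
  rewrite sum_mxtens (eq_bigr (fun u => RtoC (q u))) => [|u _].
    by rewrite -RtoC_sum q1.
  by rewrite mxE mxtens_indexK.
split; last split.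
- by move=> i; rewrite -projmx_predT trW pA; under eq_bigl do rewrite andbT.
- by move=> j; rewrite -projmx_predT trW pB.
- by move=> i j; rewrite trW pAB.
Qed.

End DiagonalModel.

Section HiddenVariable.
Variable R : realType.

Lemma measure_preimage_pred d (X : measurableType d) (T : finType)
    (mu : {measure set X -> \bar R}) (f : X -> T) :
  (forall t, measurable (f @^-1` [set t])) ->
  forall U : pred T, mu [set x | U (f x)] = (\sum_(t | U t) mu (f @^-1` [set t]))%E.
Proof.
move=> mf U.
have -> : [set x | U (f x)] = \bigcup_(t in [set` U]) f @^-1` [set t].
  by apply/seteqP; split => [x Ux | x [t Ut /= ->]] //; exists (f x).
rewrite measure_fin_bigcup;
  [|exact: finite_finset|exact: trivIset_preimage1|by move=> t _; apply: mf].
rewrite -(@bigfs _ _ _ _ (index_enum T)) ?index_enum_uniq // => t _.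
by rewrite mem_index_enum.
Qed.

Lemma probability_preimage_pred d (X : measurableType d) (T : finType)
    (mu : probability X R) (f : X -> T) :
  (forall t, measurable (f @^-1` [set t])) ->
  forall U : pred T, mu [set x | U (f x)] = (\sum_(t | U t) fine (mu (f @^-1` [set t])))%:E.
Proof.
move=> mf U; rewrite measure_preimage_pred // -sumEFin.
by apply: eq_bigr => t _; rewrite fineK // fin_num_measure.
Qed.

Definition indicators d (X : measurableType d) n (A : 'I_n -> set X) (x : X) :
  {ffun 'I_n -> bool} := [ffun i => `[< A i x >]].

Lemma measurable_indicators_fiber d (X : measurableType d) n (A : 'I_n -> set X) g :
  (forall i, measurable (A i)) -> measurable (indicators A @^-1` [set g]).
Proof.
move=> mA.
have -> : indicators A @^-1` [set g] =
    \bigcap_(i in [set: 'I_n]) if g i then A i else ~` A i.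
  apply/seteqP; split => x /=; first by move=> <- i _; rewrite ffunE; case: asboolP.
  move=> Ax; apply/ffunP => i; rewrite ffunE.
  by move: (Ax i I); case: (g i) => ?; [apply/asboolT | apply/asboolF].
apply: fin_bigcap_measurable => [|i _]; first exact: finite_finset.
by case: (g i); [apply: mA | apply/measurableC/mA].
Qed.

Lemma c_subset_bell n : @c_set R n `<=` @bell_set R n.
Proof.
move=> p [p00 [d [X [mu [A [B [mA [mB [muA [muB muAB]]]]]]]]]].
(* the hidden variable: which [A i] and which [B j] contain [x] *)
pose tau x := (enum_rank (indicators A x), enum_rank (indicators B x)).
have mtau u : measurable (tau @^-1` [set u]).
  have -> : tau @^-1` [set u] =
      indicators A @^-1` [set enum_val u.1] `&` indicators B @^-1` [set enum_val u.2].
    apply/seteqP; split => x /=; first by move=> <-; rewrite !enum_rankK.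
    by case: u => s t /= [hA hB]; rewrite /tau hA hB !enum_valK.
  exact: measurableI (measurable_indicators_fiber _ mA) (measurable_indicators_fiber _ mB).
have muE := probability_preimage_pred mu mtau.
have indicatorsE (E : 'I_n -> set X) (s : X -> _) i :
    (forall x, enum_val (s x) = indicators E x) -> [set x | enum_val (s x) i] = E i.
  by move=> sE; apply/seteqP; split => x /=; rewrite sE ffunE asboolE.
have tauA i : [set x | enum_val (tau x).1 i] = A i.
  by apply: indicatorsE => x; rewrite enum_rankK.
have tauB j : [set x | enum_val (tau x).2 j] = B j.
  by apply: indicatorsE => x; rewrite enum_rankK.
apply: (bell_hidden_variable (q := fun u => fine (mu (tau @^-1` [set u])))
  (a := fun i s => enum_val s i) (b := fun j s => enum_val s j) p00).
- by move=> u; apply/fine_ge0/measure_ge0.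
- apply: EFin_inj; rewrite -(probability_setT mu) -(muE predT).
  by congr (mu _); apply/seteqP.
- by move=> i; apply: EFin_inj; rewrite -muA -(muE (fun u => enum_val u.1 i)) tauA.
- by move=> j; apply: EFin_inj; rewrite -muB -(muE (fun u => enum_val u.2 j)) tauB.
- move=> i j; apply: EFin_inj.
  rewrite -muAB -(muE (fun u => enum_val u.1 i && enum_val u.2 j)).
  by congr (mu _); rewrite -tauA -tauB; apply/seteqP; split => x /= /andP.
Qed.

End HiddenVariable.

Section FiniteDimHilbert.
Variable R : realType.
Local Notation C := R[i].
Local Notation Re := (@complex.Re R).
Local Notation Im := (@complex.Im R).

Lemma cauchy_seq_cvg (a : R ^nat) :
  (forall e, 0 < e -> exists N, forall k l, (N <= k)%N -> (N <= l)%N -> `|a k - a l| < e) ->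
  cvgn a.
Proof.
move=> ca; apply/cauchy_cvgP/cauchy_exP => e e0.
have [N aN] := ca e e0; exists (a N), N => // k /= Nk.
by rewrite /ball /= aN.
Qed.

Lemma cvg_sqr_dist (a : R ^nat) : cvgn a -> (a k - limn a) ^+ 2 @[k --> \oo] --> 0.
Proof.
move=> ca; have d0 : a k - limn a @[k --> \oo] --> 0.
  by rewrite -(subrr (limn a)); apply: cvgB => //; exact: cvg_cst.
by rewrite -(mulr0 0); under eq_fun do rewrite expr2; apply: cvgM.
Qed.

Variable k : nat.

Definition cip (x y : 'cV[C]_k) : C := (adjmx x *m y) ord0 ord0.

Definition sqnorm (x : 'cV[C]_k) : R := \sum_r (Re (x r ord0) ^+ 2 + Im (x r ord0) ^+ 2).

Lemma cip_self (x : 'cV[C]_k) : cip x x = (sqnorm x)%:C%C.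
Proof.
rewrite /cip /sqnorm mxE rmorph_sum; apply: eq_bigr => r _.
by rewrite !mxE; apply: esym; apply: (etrans (add_Re2_Im2 _)); rewrite sqr_normc mulrC.
Qed.

Lemma sqnorm_coord (x : 'cV[C]_k) r : Re (x r ord0) ^+ 2 + Im (x r ord0) ^+ 2 <= sqnorm x.
Proof.
rewrite /sqnorm (bigD1 r) //= lerDl.
by apply: sumr_ge0 => s _; rewrite addr_ge0 ?sqr_ge0.
Qed.

Lemma sqnorm_eq0 (x : 'cV[C]_k) : sqnorm x = 0 -> x = 0.
Proof.
move/psumr_eq0P => x0; apply/matrixP => r j; rewrite ord1 mxE.
have /eqP := x0 (fun s _ => addr_ge0 (sqr_ge0 _) (sqr_ge0 _)) r isT.
rewrite paddr_eq0 ?sqr_ge0 // !sqrf_eq0 => /andP[/eqP xr /eqP yr].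
by rewrite [x r _]complexE xr yr mulr0 addr0.
Qed.

Lemma cip_complete u : hcauchy cip u -> exists x, hconv cip u x.
Proof.
move=> cu.
have coord_cvg r (g : {additive C -> R}) :
    (forall z, g z ^+ 2 <= Re z ^+ 2 + Im z ^+ 2) -> cvgn (fun l => g (u l r ord0)).
  move=> g_le; apply: cauchy_seq_cvg => e e0.
  have [N uN] := cu (e ^+ 2) (exprn_gt0 2 e0); exists N => l l' Nl Nl'.
  rewrite -(ltr_pXn2r (_ : 0 < 2)%N) ?nnegrE ?normr_ge0 ?ltW // real_normK ?num_real //.
  have := uN l l' Nl Nl'; rewrite /hnorm2 cip_self RtoCE ltcR; apply: le_lt_trans.
  have := sqnorm_coord (u l - u l') r; rewrite !mxE; apply: le_trans.
  by rewrite -raddfB g_le.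
have Re_cvg r : cvgn (fun l => Re (u l r ord0)).
  by apply: coord_cvg => z; rewrite lerDl sqr_ge0.
have Im_cvg r : cvgn (fun l => Im (u l r ord0)).
  by apply: coord_cvg => z; rewrite lerDr sqr_ge0.
pose L : 'cV[C]_k :=
  \col_r Complex (limn (fun l => Re (u l r ord0))) (limn (fun l => Im (u l r ord0))).
have dist_cvg : sqnorm (u l - L) @[l --> \oo] --> 0.
  rewrite /sqnorm; under eq_fun do under eq_bigr do rewrite !mxE !raddfB /=.
  have coord_dist_cvg r : (Re (u l r ord0) - limn (fun l => Re (u l r ord0))) ^+ 2 +
      (Im (u l r ord0) - limn (fun l => Im (u l r ord0))) ^+ 2 @[l --> \oo] --> 0.
    rewrite -(addr0 0); apply: cvgD; apply: cvg_sqr_dist.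
      exact: Re_cvg.
    exact: Im_cvg.
  have := @cvg_big _ _ _ 0 xpredT add_continuous _ _ (index_enum 'I_k) _ _
    eventually_filter (fun r _ => coord_dist_cvg r).
  by rewrite big1_eq.
have /cvgr0Pnorm_lt dist_lt := dist_cvg.
exists L => e /dist_lt [N _ uN]; exists N => l Nl.
by rewrite /hnorm2 cip_self RtoCE ltcR (le_lt_trans (ler_norm _) (uN l Nl)).
Qed.

Lemma cip_hilbert : is_hilbert cip.
Proof.
split; last split; last split; last split.
- move=> x y z a; rewrite /cip mulmxDr -scalemxAr mxE.
  by rewrite [X in X + _ = _]mxE.
- by move=> x y; rewrite /cip -[adjmx y *m x]adjmxK adjmxM adjmxK !mxE.
- by move=> x; rewrite cip_self lecR sumr_ge0 // => r _; rewrite addr_ge0 ?sqr_ge0.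
- by move=> x; rewrite cip_self => /(congr1 (@complex.Re R)) /sqnorm_eq0.
- exact: cip_complete.
Qed.

Definition mxop (A : 'M[C]_k) (x : 'cV[C]_k) : 'cV[C]_k := A *m x.

Lemma is_proj_mxop (P : 'M[C]_k) : is_projmx P -> is_proj cip (mxop P).
Proof.
move=> [PP aP]; split; last split.
- by move=> c x y; rewrite /mxop mulmxDr scalemxAr.
- by move=> x; rewrite /mxop mulmxA PP.
- by move=> x y; rewrite /mxop /cip adjmxM aP mulmxA.
Qed.

Lemma hconv_eventually (u : nat -> 'cV[C]_k) x N :
  (forall l, (N <= l)%N -> u l = x) -> hconv cip u x.
Proof.
move=> ux e e0; exists N => l /ux ->.
rewrite /hnorm2 subrr cip_self /sqnorm big1 => [|r _].
  by rewrite RtoCE ltcR.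
by rewrite !mxE expr0n addr0.
Qed.

End FiniteDimHilbert.

Arguments cip {R k}.

Lemma cconv_eventually (R : realType) (u : nat -> R[i]) z N :
  (forall l, (N <= l)%N -> u l = z) -> cconv u z.
Proof. by move=> uz e e0; exists N => l /uz ->; rewrite subrr normr0 RtoCE ltcR. Qed.

Lemma is_meet_proj_tens (R : realType) m (P Q : 'M[R[i]]_m) : is_projmx P -> is_projmx Q ->
  is_meet_proj (@cip R (m * m)) (mxop (P *t 1%:M)) (mxop (1%:M *t Q)) (mxop (P *t Q)).
Proof.
move=> Pproj Qproj; split; first exact/is_proj_mxop/projmx_tens.
have [PP _] := Pproj; have [QQ _] := Qproj.
move=> x; rewrite /mxop; split.
  move=> Px; split.
    by rewrite -{1}Px mulmxA tensmx_mul PP mul1mx Px.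
  by rewrite -{1}Px mulmxA tensmx_mul QQ mul1mx Px.
by move=> [Px Qx]; rewrite tensmx_decr -mulmxA Qx Px.
Qed.

Lemma sum_insub (V : nmodType) n K (F : nat -> V) (g : 'I_n -> V) : (n <= K)%N ->
  (forall l, F l = oapp g 0 (insub l)) -> \sum_(l < K) F l = \sum_(i < n) g i.
Proof.
move=> nK Fg; transitivity (\sum_(l < n) F l); last first.
  by apply: eq_bigr => i _; rewrite Fg valK.
rewrite (@big_ord_widen _ _ _ n K F nK) [RHS]big_mkcond; apply: eq_bigr => l _.
by case: ltnP => // nl; rewrite Fg insubF // ltnNge nl.
Qed.

Section SpectralDensity.
Variables (R : realType) (k : nat).
Local Notation C := R[i].
Variables (Q : 'M[C]_k) (D : 'rV[C]_k).
Hypothesis Q_unitary : Q *m adjmx Q = 1%:M.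
Local Notation W := (adjmx Q *m diag_mx D *m Q).

Definition eigvec (i : 'I_k) : 'cV[C]_k := adjmx (row i Q).

Lemma cip_eigvec i j : cip (eigvec i) (eigvec j) = (i == j)%:R.
Proof.
transitivity ((Q *m adjmx Q) i j); last by rewrite Q_unitary mxE.
by rewrite /cip /eigvec adjmxK !mxE; apply: eq_bigr => r _; rewrite !mxE.
Qed.

Lemma mxtrace_spectral X :
  \tr (W *m X) = \sum_i D ord0 i * cip (eigvec i) (X *m eigvec i).
Proof.
rewrite -!mulmxA mxtrace_mulC -!mulmxA mul_diag_mx /mxtrace.
apply: eq_bigr => i _; rewrite mxE /cip /eigvec adjmxK -row_mul !mulmxA.
by congr (_ * _); rewrite !mxE; apply: eq_bigr => r _; rewrite !mxE.
Qed.

Lemma mulmx_spectral x :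
  W *m x = \sum_i D ord0 i *: (cip (eigvec i) x *: eigvec i).
Proof.
apply/matrixP => r c; rewrite ord1 summxE -mulmxA mul_mx_diag mxE.
apply: eq_bigr => i _; rewrite /cip /eigvec adjmxK -row_mul !mxE.
by rewrite mulrC [RHS]mulrC -mulrA; congr (_ * _); rewrite mulrC.
Qed.

Lemma mulmx_spectral_eigvec i : W *m eigvec i = D ord0 i *: eigvec i.
Proof.
rewrite mulmx_spectral (bigD1 i) //= big1 => [|j ji]; last first.
  by rewrite cip_eigvec (negbTE ji) scale0r scaler0.
by rewrite cip_eigvec eqxx scale1r addr0.
Qed.

Hypothesis W_density : is_densitymx W.

Lemma spectral_diag_ge0 i : 0 <= D ord0 i.
Proof.
have [_ [W_ge0 _]] := W_density; have := W_ge0 (eigvec i).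
rewrite -mulmxA mulmx_spectral_eigvec -scalemxAr mxE.
by rewrite -/(cip (eigvec i) (eigvec i)) cip_eigvec eqxx mulr1.
Qed.

Lemma sum_spectral_diag : \sum_i D ord0 i = 1.
Proof.
have [_ [_ trW]] := W_density; have := mxtrace_spectral 1%:M; rewrite mulmx1 trW => ->.
by apply: eq_bigr => i _; rewrite mul1mx cip_eigvec eqxx mulr1.
Qed.

Definition spectral_vec (l : nat) : 'cV[C]_k := oapp eigvec 0 (insub l).
Definition spectral_weight (l : nat) : R :=
  oapp (fun i => complex.Re (D ord0 i)) 0 (insub l).

Lemma RtoC_spectral_weight l :
  RtoC (spectral_weight l) = oapp (fun i => D ord0 i) 0 (insub l).
Proof.
by rewrite /spectral_weight; case: insub => [i|] //=; rewrite RtoC_Re ?spectral_diag_ge0.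
Qed.

Lemma density_decomp_spectral : density_decomp cip (mxop W) spectral_vec spectral_weight.
Proof.
split; last split; last split.
- move=> l; rewrite -RtoC_ge0 RtoC_spectral_weight.
  by case: insub => [i|] //=; apply: spectral_diag_ge0.
- apply: (cconv_eventually (N := k)) => K kK; rewrite RtoC_sum -sum_spectral_diag.
  by apply: (sum_insub (F := fun l => RtoC (spectral_weight l))) => // l;
    rewrite RtoC_spectral_weight.
- move=> l l'; rewrite /spectral_vec /spectral_weight.
  case: insubP => [i _ li|_] /=; last by rewrite eqxx.
  case: insubP => [j _ l'j|_] /=; last by rewrite eqxx.
  by rewrite cip_eigvec -li -l'j.
- move=> x; apply: (hconv_eventually (N := k)) => K kK; rewrite /mxop mulmx_spectral.
  apply: (sum_insub (F := fun l =>
    RtoC (spectral_weight l) *: (cip (spectral_vec l) x *: spectral_vec l))) => // l.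
  by rewrite RtoC_spectral_weight /spectral_vec; case: insub => [i|] //=; rewrite !scaler0.
Qed.

Lemma trace_is_spectral X : trace_is cip (mxop W) (mxop X) (\tr (W *m X)).
Proof.
exists spectral_vec, spectral_weight; split; first exact: density_decomp_spectral.
apply: (cconv_eventually (N := k)) => K kK; rewrite mxtrace_spectral.
apply: (sum_insub (F := fun l =>
  RtoC (spectral_weight l) * cip (spectral_vec l) (mxop X (spectral_vec l)))) => // l.
by rewrite RtoC_spectral_weight /spectral_vec /mxop; case: insub => [i|] //=; rewrite mul0r.
Qed.

End SpectralDensity.

Lemma densitymx_spectral (R : realType) k (W : 'M[R[i]]_k) : is_densitymx W ->
  exists (Q : 'M[R[i]]_k) (D : 'rV[R[i]]_k),
    Q *m adjmx Q = 1%:M /\ W = adjmx Q *m diag_mx D *m Q.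
Proof.
move=> [aW _]; have adjE m l (A : 'M[R[i]]_(m, l)) : (A ^t* )%sesqui = adjmx A.
  by rewrite /adjmx map_trmx.
have W_herm : W \is hermsymmx.
  by apply/is_hermitianmxP; rewrite expr0 scale1r -map_trmx -[LHS]aW.
have /orthomx_spectralP W_eq := hermitian_normalmx W_herm.
have Q_unitary := spectral_unitarymx W.
exists (spectralmx W), (spectral_diag W); split; first by rewrite -adjE; apply/unitarymxP.
by rewrite -adjE -invmx_unitary.
Qed.

Lemma bell_subset_q (R : realType) n : @bell_set R n `<=` @q_set R n.
Proof.
move=> p [p00 [m [E [F [W [EP [FP [Wd [pA [pB pAB]]]]]]]]]].
split => //; exists 'cV[R[i]]_(m * m), cip; split; first exact: cip_hilbert.
have [Q [D [Q_unitary W_eq]]] := densitymx_spectral Wd; subst W.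
exists (fun i => mxop (E i *t 1%:M)), (fun j => mxop (1%:M *t F j)),
  (fun i j => mxop (E i *t F j)), (mxop (adjmx Q *m diag_mx D *m Q)).
split; first by move=> i; apply/is_proj_mxop/projmx_tens/projmx1.
split; first by move=> j; apply/is_proj_mxop/projmx_tens => //; apply: projmx1.
split; first by move=> i j; apply: is_meet_proj_tens.
split.
  by exists (spectral_vec Q), (spectral_weight D); apply: density_decomp_spectral.
split; first by move=> i; rewrite -pA; apply: trace_is_spectral.
split; first by move=> j; rewrite -pB; apply: trace_is_spectral.
by move=> i j; rewrite -pAB; apply: trace_is_spectral.
Qed.

Theorem theorem1 (R : realType) (n : nat) (hn : (1 <= n)%N) :
  @convex_mxset R n (@bell_set R n) /\
  @c_set R n `<=` @bell_set R n /\
  @bell_set R n `<=` @q_set R n.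
Proof.
split; first exact: bell_convex.
split; first exact: c_subset_bell.
exact: bell_subset_q.
Qed.
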